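(* Let $r\ge1$ and $\mu\in\mathcal P_r$. (i) If $\mu\in\mathcal P_s$ for some $s>r$, then $\lim_{n\to\infty}n^{1/r-1/s}d_r(\delta^{\mathbf u_n}_\bullet,\mu)=0$. (ii) If ${\rm supp}\,\mu$ is bounded, then $\limsup_{n\to\infty}n^{1/r}d_r(\delta^{\mathbf u_n}_\bullet,\mu)<+\infty$.
   Context: $\mathcal P$ denotes the set of Borel probability measures on $\mathbb R$; $\mathcal P_r=\{\mu\in\mathcal P:\int|x|^r{\rm d}\mu(x)<\infty\}$. For $\mu\in\mathcal P$, $F_\mu(x)=\mu(]-\infty,x])$ and $F_\mu^{-1}(t)=\sup\{x: F_\mu(x)\le t\}$, $t\in]0,1[$. $d_r(\mu,\nu)=\big(\int_0^1|F_\mu^{-1}(t)-F_\nu^{-1}(t)|^r{\rm d}t\big)^{1/r}$ on $\mathcal P_r$. With $\Xi_n=\{\mathbf x\in\mathbb R^n:x_1\le\dots\le x_n\}$ and $\delta^{\mathbf u_n}_{\mathbf x}=\frac1n\sum_{i=1}^n\delta_{x_i}$, set $d_r(\delta^{\mathbf u_n}_\bullet,\mu)=\min_{\mathbf x\in\Xi_n}d_r(\delta^{\mathbf u_n}_{\mathbf x},\mu)$ (the minimum is attained). *)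

From Stdlib Require Import Reals Lra List Sorted ClassicalEpsilon.
Open Scope R_scope.

(* Supremum of a set of reals (junk value 0 if empty or unbounded). *)
Definition Rsup (E : R -> Prop) : R :=
  match excluded_middle_informative (bound E /\ exists x, E x) with
  | left H => proj1_sig (completeness E (proj1 H) (proj2 H))
  | right _ => 0
  end.

(* Infimum (junk value 0 if empty or unbounded below). *)
Definition Rinf (E : R -> Prop) : R := - Rsup (fun y => E (- y)).

(* Power with 0^r = 0 (Stdlib's Rpower gives Rpower 0 r = 1). *)
Definition rpow (x r : R) : R := if Rle_dec x 0 then 0 else Rpower x r.

(* A Borel probability measure mu on R, represented by its distribution
   function F_mu(x) = mu(]-oo,x]). *)
Definition is_cdf (F : R -> R) : Prop :=
  (forall x y, x <= y -> F x <= F y) /\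
  (forall x eps, 0 < eps -> exists delta, 0 < delta /\
      forall y, x <= y < x + delta -> Rabs (F y - F x) < eps) /\
  (forall eps, 0 < eps -> exists M, forall x, x <= M -> Rabs (F x) < eps) /\
  (forall eps, 0 < eps -> exists M, forall x, M <= x -> Rabs (F x - 1) < eps).

Definition quant (F : R -> R) (t : R) : R := Rsup (fun x => F x <= t).

(* Integral over ]0,1[ of a nonnegative function, as the supremum of the
   Riemann integrals over compact subintervals [a,b] of ]0,1[. *)
Definition int01 (f : R -> R) : R :=
  Rsup (fun y => exists a b (pr : Riemann_integrable f a b),
          0 < a /\ a <= b /\ b < 1 /\ y = RiemannInt pr).

(* mu in P_r :  int |x|^r dmu = int_0^1 |F^{-1}(t)|^r dt < +oo. *)
Definition has_moment (F : R -> R) (r : R) : Prop :=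
  exists M, forall a b (pr : Riemann_integrable (fun t => rpow (Rabs (quant F t)) r) a b),
    0 < a -> a <= b -> b < 1 -> RiemannInt pr <= M.

Definition dr (r : R) (F G : R -> R) : R :=
  rpow (int01 (fun t => rpow (Rabs (quant F t - quant G t)) r)) (1 / r).

(* Distribution function of the empirical measure (1/n) sum_i delta_{x_i}. *)
Definition emp_cdf (x : list R) (y : R) : R :=
  INR (length (filter (fun xi => if Rle_dec xi y then true else false) x))
  / INR (length x).

Definition Xi (n : nat) (x : list R) : Prop := length x = n /\ Sorted Rle x.

(* d_r(delta^{u_n}_bullet, mu) = min_{x in Xi_n} d_r(delta^{u_n}_x, mu). *)
Definition dr_best (n : nat) (r : R) (F : R -> R) : R :=
  Rinf (fun d => exists x, Xi n x /\ d = dr r (emp_cdf x) F).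

Definition in_supp (F : R -> R) (x : R) : Prop :=
  forall eps, 0 < eps -> F (x - eps) < F (x + eps).

Definition supp_bounded (F : R -> R) : Prop :=
  exists M, forall x, in_supp F x -> Rabs x <= M.

(* The minimum over Xi_n is at most the distance to the empirical measure with atoms
   x_i = F^-1((2i+1)/(2n)).  On the cell ]i/n, (i+1)/n[ its quantile function is the constant
   x_i, so the integrand |x_i - F^-1(t)|^r is at most the r-th power of the increment of F^-1
   across the cell; as x |-> x^r is superadditive for r >= 1, the sum over the cells is at most
   the r-th power of the total increase, divided by n.
   (ii) If F^-1 takes values in [-M, M], the integral is at most (2M)^r / n, so
   d_r <= 2M n^(-1/r).
   (i) For s > r, the s-th moment forces t |F^-1(t)|^s -> 0 and vanishing tail integrals at both
   ends of ]0, 1[.  For L = eta n^(1/s) this keeps |F^-1| <= L on [1/n, 1 - 1/n], so the inner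
   cells contribute at most (2L)^r / n; on the two end cells one cuts |F^-1| at the level L,
   using x^r <= L^r + L^(r-s) x^s.  Altogether the integral is at most 7 (2 eta)^r n^(r/s - 1),
   i.e. n^(1/r - 1/s) d_r <= 14 eta for all large n. *)

From Stdlib Require Import Reals RList Lra Lia List Sorted.
From Stdlib Require Import Classical ClassicalEpsilon FunctionalExtensionality.
From Coquelicot Require Coquelicot.
Open Scope R_scope.

Lemma Rsup_is_lub (E : R -> Prop) : bound E -> (exists x, E x) -> is_lub E (Rsup E).
Proof.
  intros Hb Hne. unfold Rsup.
  destruct (excluded_middle_informative (bound E /\ exists x, E x)) as [H|H].
  - exact (proj2_sig (completeness E (proj1 H) (proj2 H))).
  - exfalso; auto.
Qed.

Lemma Rsup_unique (E : R -> Prop) m : is_lub E m -> Rsup E = m.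
Proof.
  intros Hm. apply (is_lub_u E); [|exact Hm].
  apply Rsup_is_lub; [exists m; apply Hm|].
  apply NNPP; intros Hno. destruct Hm as [_ Hm].
  assert (m <= m - 1) by (apply Hm; intros x Ex; exfalso; eauto). lra.
Qed.

Lemma Rsup_le_ub (E : R -> Prop) B : (exists x, E x) -> (forall x, E x -> x <= B) -> Rsup E <= B.
Proof. intros Hne Hb. apply (Rsup_is_lub E); auto. exists B; auto. Qed.

Lemma Rsup_ge_elem (E : R -> Prop) x B : E x -> (forall y, E y -> y <= B) -> x <= Rsup E.
Proof. intros Ex Hb. apply (Rsup_is_lub E); eauto. exists B; auto. Qed.

Lemma Rinf_le_elem (E : R -> Prop) x m : E x -> (forall y, E y -> m <= y) -> Rinf E <= x.
Proof.
  intros Ex Hm. unfold Rinf.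
  assert (- x <= Rsup (fun y => E (- y))); [|lra].
  apply Rsup_ge_elem with (- m); [rewrite Ropp_involutive; auto|].
  intros y Ey. specialize (Hm _ Ey). lra.
Qed.

Lemma Rinf_ge_lb (E : R -> Prop) x m : E x -> (forall y, E y -> m <= y) -> m <= Rinf E.
Proof.
  intros Ex Hm. unfold Rinf.
  assert (Rsup (fun y => E (- y)) <= - m); [|lra].
  apply Rsup_le_ub; [exists (- x); rewrite Ropp_involutive; auto|].
  intros y Ey. specialize (Hm _ Ey). lra.
Qed.

Lemma Rdiv_nonneg a b : 0 <= a -> 0 < b -> 0 <= a / b.
Proof. intros Ha Hb. apply Rmult_le_pos; [|left; apply Rinv_0_lt_compat]; auto. Qed.

Lemma Rabs_le_inv x L : Rabs x <= L -> - L <= x <= L.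
Proof. intros H. pose proof (Rle_abs x). pose proof (Rle_abs (- x)). rewrite Rabs_Ropp in *. lra. Qed.

Lemma Rpower_pos x y : 0 < Rpower x y.
Proof. apply exp_pos. Qed.

Lemma rpow_nonneg x r : 0 <= rpow x r.
Proof. unfold rpow. destruct (Rle_dec x 0); [lra|left; apply Rpower_pos]. Qed.

Lemma rpow_Rpower x r : 0 < x -> rpow x r = Rpower x r.
Proof. intros Hx; unfold rpow; destruct (Rle_dec x 0); [lra|auto]. Qed.

Lemma rpow_0_l r : rpow 0 r = 0.
Proof. unfold rpow; destruct (Rle_dec 0 0); lra. Qed.

Lemma rpow_le_compat x y r : 0 <= r -> 0 <= x <= y -> rpow x r <= rpow y r.
Proof.
  intros Hr [Hx Hxy]. destruct (Req_dec x 0) as [->|Hx0].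
  - rewrite rpow_0_l; apply rpow_nonneg.
  - rewrite !rpow_Rpower by lra. apply Rle_Rpower_l; lra.
Qed.

Lemma rpow_lt_compat x y r : 0 < r -> 0 <= x < y -> rpow x r < rpow y r.
Proof.
  intros Hr [Hx Hxy]. destruct (Req_dec x 0) as [->|Hx0].
  - rewrite rpow_0_l, rpow_Rpower by lra. apply Rpower_pos.
  - rewrite !rpow_Rpower by lra. apply Rlt_Rpower_l; lra.
Qed.

Lemma rpow_le_inv x L s : 0 < s -> 0 <= x -> 0 < L -> rpow x s <= Rpower L s -> x <= L.
Proof.
  intros Hs Hx HL H. apply Rnot_lt_le; intros HLx.
  pose proof (rpow_lt_compat L x s Hs ltac:(lra)). rewrite rpow_Rpower in H0 by lra. lra.
Qed.

Lemma rpow_mult_distr c x r : 0 < c -> 0 <= x -> rpow (c * x) r = Rpower c r * rpow x r.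
Proof.
  intros Hc Hx. destruct (Req_dec x 0) as [->|Hx0].
  - rewrite Rmult_0_r, !rpow_0_l; ring.
  - rewrite !rpow_Rpower by nra. rewrite Rpower_mult_distr; auto; lra.
Qed.

Lemma rpow_abs_split x s : rpow (Rabs x) s = rpow (Rmax x 0) s + rpow (Rmax (- x) 0) s.
Proof.
  unfold Rmax. destruct (Rle_dec x 0), (Rle_dec (- x) 0).
  - replace x with 0 by lra. rewrite Rabs_R0, rpow_0_l. lra.
  - rewrite Rabs_left1 by lra. rewrite rpow_0_l. lra.
  - rewrite Rabs_right by lra. rewrite rpow_0_l. lra.
  - lra.
Qed.

Lemma rpow_pred_mul x r : 0 <= x -> rpow x (r - 1) * x = rpow x r.
Proof.
  intros Hx. destruct (Req_dec x 0) as [->|Hx0]; [rewrite !rpow_0_l; ring|].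
  rewrite !rpow_Rpower by lra. pattern x at 2; rewrite <- (Rpower_1 x) by lra.
  rewrite <- Rpower_plus. f_equal; ring.
Qed.

Lemma rpow_le_mul_pred x W r : 1 <= r -> 0 <= x <= W -> rpow x r <= rpow W (r - 1) * x.
Proof.
  intros Hr [Hx HxW]. rewrite <- rpow_pred_mul by lra.
  apply Rmult_le_compat_r; [lra|]. apply rpow_le_compat; lra.
Qed.

(* Cutting at the level L: below L use x^r <= L^r, above L use x^(r-s) <= L^(r-s). *)
Lemma rpow_le_truncation x L r s : 0 <= x -> 0 < L -> 0 <= r <= s ->
  rpow x r <= Rpower L (r - s) * rpow x s + Rpower L r.
Proof.
  intros Hx HL Hrs. pose proof (Rpower_pos L (r - s)).
  destruct (Rle_dec x L) as [HxL|HxL].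
  - assert (rpow x r <= Rpower L r) by (rewrite <- (rpow_Rpower L) by lra; apply rpow_le_compat; lra).
    pose proof (rpow_nonneg x s). nra.
  - rewrite !rpow_Rpower by lra.
    replace (Rpower x r) with (Rpower x (r - s) * Rpower x s) by (rewrite <- Rpower_plus; f_equal; ring).
    assert (Rpower x (r - s) <= Rpower L (r - s)).
    { unfold Rpower. destruct (Req_dec r s) as [->|Hne].
      - replace (s - s) with 0 by ring. rewrite !Rmult_0_l; lra.
      - left. apply exp_increasing.
        assert (ln L < ln x) by (apply ln_increasing; lra). nra. }
    pose proof (Rpower_pos L r). pose proof (Rpower_pos x s). nra.
Qed.

Section Quantile.
Variable F : R -> R.
Hypothesis HF : is_cdf F.

Lemma cdf_mono x y : x <= y -> F x <= F y.
Proof. apply HF. Qed.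

Lemma quant_is_lub t : 0 < t < 1 -> is_lub (fun x => F x <= t) (quant F t).
Proof.
  intros Ht. destruct HF as (_ & _ & Hlo & Hhi). apply Rsup_is_lub.
  - destruct (Hhi (1 - t)) as [M HM]; [lra|].
    exists M. intros x Hx. apply Rnot_lt_le; intros HMx.
    specialize (HM x ltac:(lra)). apply Rabs_def2 in HM. lra.
  - destruct (Hlo t) as [M HM]; [lra|].
    exists M. specialize (HM M (Rle_refl _)). apply Rabs_def2 in HM. lra.
Qed.

Lemma quant_ge t x : 0 < t < 1 -> F x <= t -> x <= quant F t.
Proof. intros Ht Hx. apply (quant_is_lub t Ht). auto. Qed.

Lemma quant_mono t1 t2 : 0 < t1 -> t1 <= t2 -> t2 < 1 -> quant F t1 <= quant F t2.
Proof.
  intros H1 H12 H2. apply (quant_is_lub t1 ltac:(lra)).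
  intros x Hx. apply quant_ge; lra.
Qed.

End Quantile.

Definition count_le (y : R) (l : list R) : nat :=
  length (filter (fun xi => if Rle_dec xi y then true else false) l).

Lemma count_le_head_gt y h tl : Sorted Rle (h :: tl) -> y < h -> count_le y (h :: tl) = 0%nat.
Proof.
  intros Hs Hy. apply Sorted_StronglySorted in Hs; [|intros a b c; lra].
  revert h Hs Hy. induction tl as [|h2 tl IH]; intros h Hs Hy;
    unfold count_le in *; simpl; destruct (Rle_dec h y); try lra; auto.
  inversion Hs as [|? ? Htl Hall]; subst. inversion Hall; subst.
  exact (IH h2 Htl ltac:(lra)).
Qed.

Lemma count_le_spec l i y : Sorted Rle l -> (i < length l)%nat ->
  ((count_le y l <= i)%nat <-> y < nth i l 0).
Proof.
  revert i. induction l as [|h tl IH]; intros i Hs Hi; simpl in Hi; [lia|].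
  destruct (Rle_dec h y) as [Hhy|Hhy].
  - assert (Hc : count_le y (h :: tl) = S (count_le y tl)).
    { unfold count_le; simpl; destruct (Rle_dec h y); [reflexivity|lra]. }
    rewrite Hc. destruct i as [|i]; simpl; [split; intros; [lia|lra]|].
    rewrite <- IH; [lia| |lia]. inversion Hs; auto.
  - rewrite count_le_head_gt by (auto; lra). split; intros _; [|lia].
    destruct i as [|i]; simpl; [lra|].
    apply Sorted_StronglySorted in Hs; [|intros a b c; lra].
    inversion Hs as [|? ? _ Hall]; subst. rewrite Forall_forall in Hall.
    pose proof (Hall _ (nth_In tl 0 (n := i) ltac:(lia))). lra.
Qed.

Lemma quant_emp_cdf (x : list R) n i t : Xi n x -> (i < n)%nat ->
  INR i / INR n < t < INR (S i) / INR n -> quant (emp_cdf x) t = nth i x 0.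
Proof.
  intros [Hl Hs] Hi Ht. unfold quant. apply Rsup_unique.
  assert (Hn : 0 < INR n) by (apply lt_0_INR; lia).
  rewrite S_INR in Ht.
  assert (Hkey : forall y, emp_cdf x y <= t <-> y < nth i x 0).
  { intros y. rewrite <- (count_le_spec x i y Hs) by lia.
    unfold emp_cdf. fold (count_le y x). rewrite Hl.
    split; intros H.
    - apply Nat.nlt_ge; intros Hlt. apply le_INR in Hlt. rewrite S_INR in Hlt.
      assert ((INR i + 1) / INR n <= INR (count_le y x) / INR n); [|lra].
      apply Rmult_le_compat_r; [left; apply Rinv_0_lt_compat|]; lra.
    - apply le_INR in H.
      assert (INR (count_le y x) / INR n <= INR i / INR n); [|lra].
      apply Rmult_le_compat_r; [left; apply Rinv_0_lt_compat|]; lra. }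
  split.
  - intros y Hy. apply Hkey in Hy. lra.
  - intros b Hb. apply Rnot_lt_le; intros Hbx.
    assert ((b + nth i x 0) / 2 <= b) by (apply Hb, Hkey; lra). lra.
Qed.

Definition mono_on (f : R -> R) (a b : R) : Prop :=
  forall x y, a <= x -> x <= y -> y <= b -> f x <= f y.

Lemma IsStepFun_ext f g a b : a <= b -> (forall t, a < t < b -> f t = g t) ->
  IsStepFun f a b -> IsStepFun g a b.
Proof.
  intros Hab Hfg [l [lf (H1 & H2 & H3 & H4 & H5)]]. exists l, lf.
  repeat split; auto.
  intros i Hi x Hx. unfold open_interval in Hx.
  rewrite Rmin_left in H2 by lra. rewrite Rmax_right in H3 by lra.
  pose proof (proj1 (RList_P6 l) H1) as Hsorted.
  assert (pos_Rl l 0 <= pos_Rl l i) by (apply Hsorted; lia).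
  assert (pos_Rl l (S i) <= pos_Rl l (pred (length l))) by (apply Hsorted; lia).
  rewrite <- Hfg by lra. apply H5; auto.
Qed.

Definition glue (c : R) (h1 h2 : R -> R) (t : R) : R := if Rle_dec t c then h1 t else h2 t.

Lemma glue_IsStepFun_l a c (h1 : StepFun a c) h2 : a <= c -> IsStepFun (glue c h1 h2) a c.
Proof.
  intros Hac. apply IsStepFun_ext with h1; [auto| |apply pre].
  intros t Ht; unfold glue; destruct (Rle_dec t c); [auto|lra].
Qed.

Lemma glue_IsStepFun_r c b h1 (h2 : StepFun c b) : c <= b -> IsStepFun (glue c h1 h2) c b.
Proof.
  intros Hcb. apply IsStepFun_ext with h2; [auto| |apply pre].
  intros t Ht; unfold glue; destruct (Rle_dec t c); [lra|auto].
Qed.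

Lemma glue_IsStepFun a c b (h1 : StepFun a c) (h2 : StepFun c b) : a <= c -> c <= b ->
  IsStepFun (glue c h1 h2) a b.
Proof.
  intros Hac Hcb. apply StepFun_P41 with c; auto.
  - apply glue_IsStepFun_l; auto.
  - apply glue_IsStepFun_r; auto.
Qed.

Lemma glue_RiemannInt_SF a c b (h1 : StepFun a c) (h2 : StepFun c b) (Hac : a <= c) (Hcb : c <= b) :
  RiemannInt_SF (mkStepFun (glue_IsStepFun a c b h1 h2 Hac Hcb))
  <= RiemannInt_SF h1 + RiemannInt_SF h2.
Proof.
  rewrite <- (StepFun_P43 (glue_IsStepFun_l a c h1 h2 Hac) (glue_IsStepFun_r c b h1 h2 Hcb)).
  apply Rplus_le_compat; apply StepFun_P37; auto;
    intros t Ht; simpl; unfold glue; destruct (Rle_dec t c); lra.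
Qed.

Lemma mono_step_approx_short f a b d : a <= b -> b - a <= d -> mono_on f a b ->
  { phi : StepFun a b & { psi : StepFun a b |
     (forall t, a <= t <= b -> Rabs (f t - phi t) <= psi t) /\ (forall t, 0 <= psi t) /\
     RiemannInt_SF psi <= d * (f b - f a) } }.
Proof.
  intros Hab Hd Hm.
  exists (mkStepFun (StepFun_P4 a b (f a))), (mkStepFun (StepFun_P4 a b (f b - f a))).
  assert (f a <= f b) by (apply Hm; lra).
  split; [|split].
  - intros t Ht; simpl; unfold fct_cte. assert (f a <= f t <= f b) by (split; apply Hm; lra).
    rewrite Rabs_right; lra.
  - intros t; simpl; unfold fct_cte; lra.
  - rewrite StepFun_P18, Rmult_comm. apply Rmult_le_compat_r; lra.
Qed.

Lemma mono_step_approx f d (Hd : 0 < d) N : forall a b, a <= b -> b - a <= INR N * d -> mono_on f a b ->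
  { phi : StepFun a b & { psi : StepFun a b |
     (forall t, a <= t <= b -> Rabs (f t - phi t) <= psi t) /\ (forall t, 0 <= psi t) /\
     RiemannInt_SF psi <= d * (f b - f a) } }.
Proof.
  induction N as [|N IH]; intros a b Hab Hl Hm.
  - apply mono_step_approx_short; auto. simpl in Hl; lra.
  - destruct (Rle_dec (b - a) d) as [Hle|Hgt]; [apply mono_step_approx_short; auto|].
    set (c := a + d). assert (Hac : a <= c) by (unfold c; lra). assert (Hcb : c <= b) by (unfold c; lra).
    destruct (mono_step_approx_short f a c d Hac ltac:(unfold c; lra)) as [phi1 [psi1 (A1 & B1 & C1)]].
    { intros x y ? ? ?; apply Hm; lra. }
    destruct (IH c b Hcb) as [phi2 [psi2 (A2 & B2 & C2)]].
    { rewrite S_INR in Hl. unfold c; lra. }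
    { intros x y ? ? ?; apply Hm; lra. }
    exists (mkStepFun (glue_IsStepFun a c b phi1 phi2 Hac Hcb)),
           (mkStepFun (glue_IsStepFun a c b psi1 psi2 Hac Hcb)).
    split; [|split]; simpl; unfold glue.
    + intros t Ht. destruct (Rle_dec t c); [apply A1|apply A2]; lra.
    + intros t. destruct (Rle_dec t c); auto.
    + eapply Rle_trans; [apply glue_RiemannInt_SF|]. lra.
Qed.

Lemma Riemann_integrable_mono f a b : a <= b -> mono_on f a b -> Riemann_integrable f a b.
Proof.
  intros Hab Hm eps.
  assert (Hfab : f a <= f b) by (apply Hm; lra).
  set (d := eps / (2 * (f b - f a + 1))).
  assert (Hd : 0 < d) by (apply Rdiv_lt_0_compat; [apply cond_pos|lra]).
  assert (HN : exists N, b - a <= INR N * d).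
  { destruct (INR_archimed d (b - a) Hd) as [N HN]. exists N; lra. }
  destruct (constructive_indefinite_description _ HN) as [N HNd].
  destruct (mono_step_approx f d Hd N a b Hab HNd Hm) as [phi [psi (A & B & C)]].
  exists phi, psi. split.
  - intros t Ht. rewrite Rmin_left, Rmax_right in Ht by lra. auto.
  - assert (0 <= RiemannInt_SF psi).
    { rewrite <- (Rmult_0_l (b - a)), <- (StepFun_P18 a b 0). apply StepFun_P37; auto. }
    assert (d * (f b - f a) < eps).
    { assert (d * (f b - f a) <= d * (f b - f a + 1)) by (apply Rmult_le_compat_l; lra).
      assert (d * (f b - f a + 1) = eps / 2) by (unfold d; field; lra).
      pose proof (cond_pos eps). lra. }
    rewrite Rabs_right; lra.
Qed.

Lemma RiemannInt_nonneg f a b (pr : Riemann_integrable f a b) : a <= b ->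
  (forall t, a < t < b -> 0 <= f t) -> 0 <= RiemannInt pr.
Proof.
  intros Hab H.
  pose proof (RiemannInt_P19 (RiemannInt_P14 a b 0) pr Hab ltac:(intros; unfold fct_cte; auto)) as H1.
  rewrite RiemannInt_P15 in H1. lra.
Qed.

Module Reflection.
Import Coquelicot.Coquelicot.

Lemma RiemannInt_reflect f a b (pr : Riemann_integrable f (1 - b) (1 - a))
  (pr' : Riemann_integrable (fun t => f (1 - t)) a b) : RiemannInt pr' = RiemannInt pr.
Proof.
  assert (Hex : ex_RInt f (-1 * a + 1) (-1 * b + 1)).
  { apply ex_RInt_swap. replace (-1 * b + 1) with (1 - b) by ring.
    replace (-1 * a + 1) with (1 - a) by ring. apply ex_RInt_Reals_1, pr. }
  rewrite <- !RInt_Reals, <- (opp_RInt_swap f).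
  2:{ replace (1 - a) with (-1 * a + 1) by ring; replace (1 - b) with (-1 * b + 1) by ring; exact Hex. }
  replace (1 - a) with (-1 * a + 1) by ring. replace (1 - b) with (-1 * b + 1) by ring.
  rewrite <- (RInt_comp_lin f) by exact Hex.
  rewrite (RInt_ext (fun y => scal (-1) (f (-1 * y + 1))) (fun y => opp (f (1 - y)))).
  2:{ intros x _. replace (-1 * x + 1) with (1 - x) by ring. change (-1 * f (1 - x) = - f (1 - x)). ring. }
  rewrite (RInt_opp (V := R_CompleteNormedModule) (fun y => f (1 - y))), opp_opp; [reflexivity|].
  apply ex_RInt_Reals_1, pr'.
Qed.

End Reflection.
Import Reflection.

Definition mono01 (Q : R -> R) : Prop := forall x y, 0 < x -> x <= y -> y < 1 -> Q x <= Q y.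

(* [has_moment F s] is [moment_bounded (quant F) s] by definition. *)
Definition moment_bounded (Q : R -> R) (s : R) : Prop :=
  exists M, forall a b (pr : Riemann_integrable (fun t => rpow (Rabs (Q t)) s) a b),
    0 < a -> a <= b -> b < 1 -> RiemannInt pr <= M.

Definition reflect (Q : R -> R) (t : R) : R := - Q (1 - t).

Lemma quant_mono01 F : is_cdf F -> mono01 (quant F).
Proof. intros HF x y Hx Hxy Hy. apply quant_mono; auto; lra. Qed.

Lemma reflect_mono01 Q : mono01 Q -> mono01 (reflect Q).
Proof. intros HQ x y Hx Hxy Hy. apply Ropp_le_contravar, HQ; lra. Qed.

Lemma rpow_abs_integrable Q s a b : mono01 Q -> 0 <= s -> 0 < a -> a <= b -> b < 1 ->
  Riemann_integrable (fun t => rpow (Rabs (Q t)) s) a b.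
Proof.
  intros HQ Hs Ha Hab Hb.
  replace (fun t => rpow (Rabs (Q t)) s) with
    (fun t => rpow (Rmax (Q t) 0) s + (-1) * (- rpow (Rmax (- Q t) 0) s))
    by (apply functional_extensionality; intros t; rewrite rpow_abs_split; ring).
  apply RiemannInt_P10; apply Riemann_integrable_mono; auto; intros x y Hx Hxy Hy.
  - apply rpow_le_compat; auto. split; [apply Rmax_r|]. apply Rle_max_compat_r, HQ; lra.
  - apply Ropp_le_contravar, rpow_le_compat; auto.
    split; [apply Rmax_r|]. apply Rle_max_compat_r, Ropp_le_contravar, HQ; lra.
Qed.

Lemma RiemannInt_rpow_abs_reflect Q s a b a' b'
  (pr : Riemann_integrable (fun t => rpow (Rabs (reflect Q t)) s) a b)
  (prQ : Riemann_integrable (fun t => rpow (Rabs (Q t)) s) a' b') :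
  a <= b -> a' = 1 - b -> b' = 1 - a -> RiemannInt pr = RiemannInt prQ.
Proof.
  intros Hab -> ->.
  assert (Heq : forall t, rpow (Rabs (reflect Q t)) s = rpow (Rabs (Q (1 - t))) s)
    by (intros t; unfold reflect; rewrite Rabs_Ropp; reflexivity).
  assert (pr' : Riemann_integrable (fun t => rpow (Rabs (Q (1 - t))) s) a b).
  { replace (fun t => rpow (Rabs (Q (1 - t))) s) with (fun t => rpow (Rabs (reflect Q t)) s);
      [exact pr|apply functional_extensionality; auto]. }
  rewrite (RiemannInt_P18 pr pr' Hab) by auto.
  apply (RiemannInt_reflect (fun t => rpow (Rabs (Q t)) s)).
Qed.

Lemma reflect_moment_bounded Q s : mono01 Q -> 0 <= s -> moment_bounded Q s ->
  moment_bounded (reflect Q) s.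
Proof.
  intros HQ Hs [M HM]. exists M. intros a b pr Ha Hab Hb.
  rewrite (RiemannInt_rpow_abs_reflect Q s a b _ _ pr
             (rpow_abs_integrable Q s (1 - b) (1 - a) HQ Hs ltac:(lra) ltac:(lra) ltac:(lra))
             Hab eq_refl eq_refl).
  apply HM; lra.
Qed.

Lemma le_of_forall_small_shift x K c t : 0 < t -> 0 <= c ->
  (forall a, 0 < a < t -> x - c * a <= K) -> x <= K.
Proof.
  intros Ht Hc H. apply Rnot_lt_le; intros HKx.
  set (a := Rmin (t / 2) ((x - K) / (2 * (c + 1)))).
  assert (Ha : 0 < a) by (apply Rmin_glb_lt; [lra|apply Rdiv_lt_0_compat; lra]).
  assert (Hat : a <= t / 2) by apply Rmin_l.
  assert (Hca : c * a < x - K).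
  { apply Rle_lt_trans with ((c + 1) * ((x - K) / (2 * (c + 1)))).
    - apply Rmult_le_compat; try lra. apply Rmin_r.
    - replace ((c + 1) * ((x - K) / (2 * (c + 1)))) with ((x - K) / 2) by (field; lra). lra. }
  specialize (H a ltac:(lra)). lra.
Qed.

Section Moments.
Variables (Q : R -> R) (s : R).
Hypothesis HQ : mono01 Q.
Hypothesis Hs : 0 < s.
Hypothesis Hmom : moment_bounded Q s.

Let G t := rpow (Rabs (Q t)) s.

Lemma moment_tail_left eps : 0 < eps -> exists d, 0 < d < 1 /\
  forall a b (pr : Riemann_integrable G a b), 0 < a -> a <= b -> b <= d -> RiemannInt pr <= eps.
Proof.
  intros He. destruct Hmom as [M HM].
  set (E := fun y => exists a b (pr : Riemann_integrable G a b),
              0 < a /\ a <= b /\ b < 1 /\ y = RiemannInt pr).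
  assert (HE : is_lub E (Rsup E)).
  { apply Rsup_is_lub.
    - exists M. intros y (a & b & pr & H1 & H2 & H3 & ->). apply HM; auto.
    - exists (RiemannInt (RiemannInt_P7 G (1/2))), (1/2), (1/2), (RiemannInt_P7 G (1/2)).
      repeat split; lra. }
  assert (Hclose : exists y, E y /\ Rsup E - eps < y).
  { apply NNPP; intros Hno. assert (Rsup E <= Rsup E - eps); [|lra].
    apply HE. intros y Ey. apply Rnot_lt_le; intros Hy. apply Hno; eauto. }
  destruct Hclose as [y [(a0 & b0 & pr0 & Ha0 & Hab0 & Hb0 & ->) Hy]].
  exists a0. split; [lra|].
  intros a b pr Ha Hab Hb.
  (* [a, b] and [a0, b0] fit into one admissible interval, and [b, a0] contributes >= 0. *)
  assert (prm : Riemann_integrable G b a0) by (apply rpow_abs_integrable; auto; lra).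
  pose proof (RiemannInt_P21 Hab Hb pr prm) as pra.
  pose proof (RiemannInt_P21 (Rle_trans _ _ _ Hab Hb) Hab0 pra pr0) as prt.
  pose proof (RiemannInt_P26 pr prm pra) as C1.
  pose proof (RiemannInt_P26 pra pr0 prt) as C2.
  assert (RiemannInt prt <= Rsup E) by (apply HE; exists a, b0, prt; repeat split; lra).
  assert (0 <= RiemannInt prm) by (apply RiemannInt_nonneg; auto; intros; apply rpow_nonneg).
  lra.
Qed.

Lemma moment_point_left_nonpos eps : 0 < eps -> exists d, 0 < d < 1 /\
  forall t, 0 < t <= d -> Q t <= 0 -> t * G t <= eps.
Proof.
  intros He. destruct (moment_tail_left eps He) as [d [Hd Htail]].
  exists d. split; auto. intros t Ht HQt.
  (* |Q| decreases on ]0, t], so G t bounds G from below there. *)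
  apply (le_of_forall_small_shift _ _ (G t) t); [lra|apply rpow_nonneg|].
  intros a Ha.
  assert (pr : Riemann_integrable G a t) by (apply rpow_abs_integrable; auto; lra).
  assert (Hlow : G t * (t - a) <= RiemannInt pr).
  { apply (RiemannInt_const_bound (l := G t) (u := G a) pr ltac:(lra)).
    intros x Hx. unfold G.
    assert (Q a <= Q x <= Q t) by (split; apply HQ; lra).
    rewrite !(Rabs_left1 (Q _)) by lra.
    split; apply rpow_le_compat; lra. }
  assert (RiemannInt pr <= eps) by (apply Htail; lra).
  lra.
Qed.

Lemma moment_point_left eps : 0 < eps -> exists d, 0 < d <= 1/2 /\
  forall t, 0 < t <= d -> t * G t <= eps.
Proof.
  intros He. destruct (moment_point_left_nonpos eps He) as [d1 [Hd1 Hneg]].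
  set (C := G (1/2)). assert (HC : 0 <= C) by apply rpow_nonneg.
  set (d := Rmin (Rmin d1 (1/2)) (eps / (C + 1))).
  assert (Hd : d <= d1 /\ d <= 1/2 /\ d <= eps / (C + 1)).
  { unfold d. pose proof (Rmin_l (Rmin d1 (1/2)) (eps / (C + 1))).
    pose proof (Rmin_r (Rmin d1 (1/2)) (eps / (C + 1))).
    pose proof (Rmin_l d1 (1/2)). pose proof (Rmin_r d1 (1/2)). lra. }
  exists d. split.
  { split; [|lra]. repeat apply Rmin_glb_lt; try lra. apply Rdiv_lt_0_compat; lra. }
  intros t Ht. destruct (Rle_dec (Q t) 0) as [HQt|HQt]; [apply Hneg; lra|].
  assert (HGt : G t <= C).
  { apply rpow_le_compat; [lra|]. assert (Q t <= Q (1/2)) by (apply HQ; lra).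
    rewrite !Rabs_right by lra. lra. }
  assert (t * C <= eps).
  { apply Rle_trans with (eps / (C + 1) * (C + 1)); [|right; field; lra].
    pose proof (rpow_nonneg (Rabs (Q t)) s). nra. }
  pose proof (rpow_nonneg (Rabs (Q t)) s). fold (G t) in *. nra.
Qed.

End Moments.

Lemma moment_tail_right Q s : mono01 Q -> 0 < s -> moment_bounded Q s ->
  forall eps, 0 < eps -> exists d, 0 < d < 1 /\
  forall a b (pr : Riemann_integrable (fun t => rpow (Rabs (Q t)) s) a b),
    1 - d <= a -> a <= b -> b < 1 -> RiemannInt pr <= eps.
Proof.
  intros HQ Hs Hmom eps He.
  destruct (moment_tail_left (reflect Q) s (reflect_mono01 Q HQ) Hs
              (reflect_moment_bounded Q s HQ (Rlt_le _ _ Hs) Hmom) eps He) as [d [Hd Htail]].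
  exists d. split; auto. intros a b pr Ha Hab Hb.
  assert (pr' : Riemann_integrable (fun t => rpow (Rabs (reflect Q t)) s) (1 - b) (1 - a))
    by (apply rpow_abs_integrable; [apply reflect_mono01| | | |]; auto; lra).
  rewrite <- (RiemannInt_rpow_abs_reflect Q s (1 - b) (1 - a) a b pr' pr); try ring; try lra.
  apply Htail; lra.
Qed.

Lemma moment_point_right Q s : mono01 Q -> 0 < s -> moment_bounded Q s ->
  forall eps, 0 < eps -> exists d, 0 < d <= 1/2 /\
  forall t, 0 < t <= d -> t * rpow (Rabs (Q (1 - t))) s <= eps.
Proof.
  intros HQ Hs Hmom eps He.
  destruct (moment_point_left (reflect Q) s (reflect_mono01 Q HQ) Hs
              (reflect_moment_bounded Q s HQ (Rlt_le _ _ Hs) Hmom) eps He) as [d [Hd Hpt]].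
  exists d. split; auto. intros t Ht.
  rewrite <- Rabs_Ropp. apply Hpt; auto.
Qed.

Fixpoint psum (B : nat -> R) (m : nat) : R :=
  match m with O => 0 | S m => psum B m + B m end.

Lemma psum_0 m : psum (fun _ => 0) m = 0.
Proof. induction m; simpl; lra. Qed.

Lemma psum_nonneg B m : (forall i, 0 <= B i) -> 0 <= psum B m.
Proof. intros H; induction m; simpl; [lra|]. specialize (H m); lra. Qed.

Lemma psum_plus x y m : psum (fun i => x i + y i) m = psum x m + psum y m.
Proof. induction m; simpl; lra. Qed.

Lemma psum_scal c x m : psum (fun i => c * x i) m = c * psum x m.
Proof. induction m; simpl; [ring|]. rewrite IHm; ring. Qed.

Lemma psum_le x y m : (forall i, (i < m)%nat -> x i <= y i) -> psum x m <= psum y m.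
Proof.
  induction m; simpl; intros H; [lra|].
  assert (x m <= y m) by (apply H; lia).
  assert (psum x m <= psum y m) by (apply IHm; intros; apply H; lia). lra.
Qed.

Lemma psum_indicator k c m :
  psum (fun i => if Nat.eqb i k then c else 0) m = if Nat.ltb k m then c else 0.
Proof.
  induction m; simpl; [destruct k; simpl; lra|]. rewrite IHm.
  destruct (Nat.eqb_spec m k), (Nat.ltb_spec k m), (Nat.ltb_spec k (S m)); try lia; subst; lra.
Qed.

Lemma psum_telescope g m : psum (fun i => g (S i) - g i) m = g m - g O.
Proof. induction m; simpl; [lra|]. rewrite IHm; lra. Qed.

(* Each increment x satisfies x^r <= W^(r-1) x, where W is the total increase, and the x telescope to W. *)
Lemma psum_rpow_increments_le (g : nat -> R) n r : 1 <= r ->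
  (forall i, (i < n)%nat -> g i <= g (S i)) ->
  psum (fun i => rpow (g (S i) - g i) r) n <= rpow (g n - g O) r.
Proof.
  intros Hr Hg.
  assert (Hmon : forall i j, (i <= j <= n)%nat -> g i <= g j).
  { intros i j [Hij Hjn]. induction Hij; [lra|].
    specialize (Hg m ltac:(lia)). specialize (IHHij ltac:(lia)). lra. }
  set (W := g n - g O).
  assert (HW : 0 <= W) by (unfold W; pose proof (Hmon O n ltac:(lia)); lra).
  apply Rle_trans with (psum (fun i => rpow W (r - 1) * (g (S i) - g i)) n).
  - apply psum_le. intros i Hi. apply rpow_le_mul_pred; auto.
    pose proof (Hg i Hi). pose proof (Hmon O i ltac:(lia)). pose proof (Hmon (S i) n ltac:(lia)).
    unfold W; lra.
  - rewrite psum_scal, psum_telescope. fold W. rewrite rpow_pred_mul; [lra|auto].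
Qed.

Lemma cell_bounds_01 n i : (i <= n)%nat -> (0 < n)%nat -> 0 <= INR i / INR n <= 1.
Proof.
  intros Hi Hn. assert (0 < INR n) by (apply lt_0_INR; lia). apply le_INR in Hi. split.
  - apply Rdiv_nonneg; auto. apply pos_INR.
  - apply Rmult_le_reg_r with (INR n); auto. unfold Rdiv. rewrite Rmult_assoc, Rinv_l; lra.
Qed.

Lemma RiemannInt_cells_le f n B : (0 < n)%nat -> (forall i, 0 <= B i) ->
  (forall i a b (pr : Riemann_integrable f a b), (i < n)%nat ->
     INR i / INR n <= a -> a <= b -> b <= INR (S i) / INR n -> 0 < a -> b < 1 ->
     RiemannInt pr <= B i) ->
  forall a b (pr : Riemann_integrable f a b), 0 < a -> a <= b -> b < 1 -> RiemannInt pr <= psum B n.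
Proof.
  intros Hn HB Hcell.
  assert (Hnr : 0 < INR n) by (apply lt_0_INR; auto).
  assert (Hupto : forall m, (m <= n)%nat -> forall a b (pr : Riemann_integrable f a b),
            0 < a -> a <= b -> b < 1 -> b <= INR m / INR n -> RiemannInt pr <= psum B m).
  { induction m as [|m IH]; intros Hm a b pr Ha Hab Hb Hbm.
    - simpl in Hbm. unfold Rdiv in Hbm. rewrite Rmult_0_l in Hbm. lra.
    - simpl psum. pose proof (HB m). pose proof (psum_nonneg B m HB).
      set (c := INR m / INR n) in *.
      destruct (Rle_dec b c) as [Hbc|Hbc]; [pose proof (IH ltac:(lia) a b pr Ha Hab Hb Hbc); lra|].
      destruct (Rle_dec c a) as [Hca|Hac]; [pose proof (Hcell m a b pr ltac:(lia) Hca Hab Hbm Ha Hb); lra|].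
      assert (pr1 : Riemann_integrable f a c) by (apply (RiemannInt_P22 pr); lra).
      assert (pr2 : Riemann_integrable f c b) by (apply (RiemannInt_P23 pr); lra).
      rewrite <- (RiemannInt_P26 pr1 pr2 pr).
      pose proof (IH ltac:(lia) a c pr1 Ha ltac:(lra) ltac:(lra) (Rle_refl _)).
      pose proof (Hcell m c b pr2 ltac:(lia) (Rle_refl _) ltac:(lra) Hbm ltac:(lra) Hb). lra. }
  intros a b pr Ha Hab Hb. apply (Hupto n (Nat.le_refl _)); auto.
  unfold Rdiv; rewrite Rinv_r; lra.
Qed.

Lemma RiemannInt_cells_increments_le f n r (g E : nat -> R) : 1 <= r -> (0 < n)%nat ->
  (forall i, (i < n)%nat -> g i <= g (S i)) -> (forall i, 0 <= E i) ->
  (forall i a b (pr : Riemann_integrable f a b), (i < n)%nat ->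
     INR i / INR n <= a -> a <= b -> b <= INR (S i) / INR n -> 0 < a -> b < 1 ->
     RiemannInt pr <= rpow (g (S i) - g i) r / INR n + E i) ->
  forall a b (pr : Riemann_integrable f a b), 0 < a -> a <= b -> b < 1 ->
  RiemannInt pr <= rpow (g n - g O) r / INR n + psum E n.
Proof.
  intros Hr Hn Hg HE Hcell a b pr Ha Hab Hb.
  assert (Hnr : 0 < INR n) by (apply lt_0_INR; auto).
  eapply Rle_trans;
    [apply (RiemannInt_cells_le f n (fun i => rpow (g (S i) - g i) r / INR n + E i) Hn); eauto|].
  - intros i. pose proof (HE i). pose proof (Rdiv_nonneg (rpow (g (S i) - g i) r) (INR n)
      (rpow_nonneg _ _) Hnr). lra.
  - rewrite psum_plus. apply Rplus_le_compat_r.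
    replace (fun i => rpow (g (S i) - g i) r / INR n)
      with (fun i => / INR n * rpow (g (S i) - g i) r)
      by (apply functional_extensionality; intros i; unfold Rdiv; ring).
    rewrite psum_scal. unfold Rdiv. rewrite (Rmult_comm (rpow _ r)).
    apply Rmult_le_compat_l; [left; apply Rinv_0_lt_compat; auto|].
    apply psum_rpow_increments_le; auto.
Qed.

Definition cell_mid (n i : nat) : R := (2 * INR i + 1) / (2 * INR n).

Definition mid_atoms (F : R -> R) (n : nat) : list R :=
  map (fun i => quant F (cell_mid n i)) (seq 0 n).

Definition quant_err (F : R -> R) (n : nat) (r : R) (t : R) : R :=
  rpow (Rabs (quant (emp_cdf (mid_atoms F n)) t - quant F t)) r.

Lemma cell_mid_in_cell n i : (i < n)%nat -> INR i / INR n < cell_mid n i < INR (S i) / INR n.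
Proof.
  intros Hi. assert (Hn : 0 < INR n) by (apply lt_0_INR; lia).
  assert (Hinv : 0 < / (2 * INR n)) by (apply Rinv_0_lt_compat; lra).
  unfold cell_mid. rewrite S_INR.
  replace (INR i / INR n) with (2 * INR i / (2 * INR n)) by (field; lra).
  replace ((INR i + 1) / INR n) with ((2 * INR i + 2) / (2 * INR n)) by (field; lra).
  split; apply Rmult_lt_compat_r; lra.
Qed.

Lemma Sorted_map_seq (g : nat -> R) start len :
  (forall i j, (start <= i)%nat -> (i <= j)%nat -> (j < start + len)%nat -> g i <= g j) ->
  Sorted Rle (map g (seq start len)).
Proof.
  revert start. induction len as [|len IH]; intros start H; simpl; constructor.
  - apply IH. intros; apply H; lia.
  - destruct len; simpl; constructor. apply H; lia.
Qed.

Section Midpoints.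
Variable F : R -> R.
Hypothesis HF : is_cdf F.
Variable n : nat.
Hypothesis Hn : (0 < n)%nat.

Lemma cell_mid_01 i : (i < n)%nat -> 0 < cell_mid n i < 1.
Proof.
  intros Hi. pose proof (cell_mid_in_cell n i Hi).
  pose proof (cell_bounds_01 n i ltac:(lia) Hn). pose proof (cell_bounds_01 n (S i) ltac:(lia) Hn). lra.
Qed.

Lemma mid_atoms_Xi : Xi n (mid_atoms F n).
Proof.
  split; [unfold mid_atoms; rewrite length_map, length_seq; auto|].
  apply Sorted_map_seq. intros i j _ Hij Hj. simpl in Hj.
  apply quant_mono; auto; try (apply cell_mid_01; lia).
  assert (0 < INR n) by (apply lt_0_INR; lia). apply le_INR in Hij.
  apply Rmult_le_compat_r; [left; apply Rinv_0_lt_compat|]; lra.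
Qed.

Lemma nth_mid_atoms i : (i < n)%nat -> nth i (mid_atoms F n) 0 = quant F (cell_mid n i).
Proof.
  intros Hi. unfold mid_atoms.
  rewrite nth_indep with (d' := quant F (cell_mid n 0)) by (rewrite length_map, length_seq; auto).
  rewrite (map_nth (fun i => quant F (cell_mid n i))), seq_nth; auto.
Qed.

Lemma quant_err_on_cell r i t : (i < n)%nat -> INR i / INR n < t < INR (S i) / INR n ->
  quant_err F n r t = rpow (Rabs (quant F (cell_mid n i) - quant F t)) r.
Proof.
  intros Hi Ht. unfold quant_err.
  rewrite (quant_emp_cdf (mid_atoms F n) n i t mid_atoms_Xi Hi Ht), nth_mid_atoms; auto.
Qed.

Lemma dr_best_le r B : 0 < r -> 0 <= B ->
  (forall a b (pr : Riemann_integrable (quant_err F n r) a b),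
     0 < a -> a <= b -> b < 1 -> RiemannInt pr <= B) ->
  0 <= dr_best n r F <= rpow B (1 / r).
Proof.
  intros Hr HB Hint.
  set (D := fun d => exists x, Xi n x /\ d = dr r (emp_cdf x) F).
  assert (HD : D (dr r (emp_cdf (mid_atoms F n)) F))
    by (exists (mid_atoms F n); split; auto; apply mid_atoms_Xi).
  assert (HD0 : forall y, D y -> 0 <= y) by (intros y [x [_ ->]]; apply rpow_nonneg).
  split; [apply (Rinf_ge_lb D _ 0 HD HD0)|].
  eapply Rle_trans; [apply (Rinf_le_elem D _ 0 HD HD0)|].
  apply rpow_le_compat; [left; apply Rdiv_lt_0_compat; lra|].
  set (f := quant_err F n r).
  set (I := fun y => exists a b (pr : Riemann_integrable f a b),
              0 < a /\ a <= b /\ b < 1 /\ y = RiemannInt pr).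
  assert (HI : I (RiemannInt (RiemannInt_P7 f (1/2))))
    by (exists (1/2), (1/2), (RiemannInt_P7 f (1/2)); repeat split; lra).
  assert (HIB : forall y, I y -> y <= B) by (intros y (a & b & pr & ? & ? & ? & ->); auto).
  split.
  - rewrite <- (RiemannInt_P9 (RiemannInt_P7 f (1/2))). apply (Rsup_ge_elem I _ B HI HIB).
  - apply Rsup_le_ub; eauto.
Qed.

Lemma quant_err_cell_le r (g : nat -> R) i : 0 <= r -> (i < n)%nat ->
  (forall u, INR i / INR n < u < INR (S i) / INR n -> g i <= quant F u <= g (S i)) ->
  forall a b (pr : Riemann_integrable (quant_err F n r) a b),
  INR i / INR n <= a -> a <= b -> b <= INR (S i) / INR n ->
  RiemannInt pr <= rpow (g (S i) - g i) r / INR n.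
Proof.
  intros Hr Hi Hg a b pr Ha Hab Hb.
  assert (Hnr : 0 < INR n) by (apply lt_0_INR; auto).
  set (u := rpow (g (S i) - g i) r). assert (Hu : 0 <= u) by apply rpow_nonneg.
  assert (Hlen : b - a <= 1 / INR n).
  { rewrite S_INR in Hb. assert ((INR i + 1) / INR n = INR i / INR n + 1 / INR n) by (field; lra). lra. }
  apply Rle_trans with (u * (b - a)).
  - apply (RiemannInt_const_bound (l := 0) (u := u) pr Hab).
    intros x Hx. split; [apply rpow_nonneg|]. rewrite (quant_err_on_cell r i x Hi) by lra.
    apply rpow_le_compat; [lra|]. split; [apply Rabs_pos|].
    pose proof (Hg x ltac:(lra)). pose proof (Hg (cell_mid n i) (cell_mid_in_cell n i Hi)).
    apply Rabs_le; lra.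
  - replace (u / INR n) with (u * (1 / INR n)) by (field; lra).
    apply Rmult_le_compat_l; lra.
Qed.

End Midpoints.

Lemma cdf_flat_off_supp F u v : is_cdf F -> u <= v ->
  (forall z, u <= z <= v -> ~ in_supp F z) -> F v <= F u.
Proof.
  intros HF Huv Hns.
  set (A := fun z => u <= z <= v /\ F z <= F u).
  assert (HA : is_lub A (Rsup A)).
  { apply Rsup_is_lub; [exists v; intros z Hz; apply Hz|exists u; split; lra]. }
  set (m := Rsup A) in *.
  assert (Hum : u <= m) by (apply HA; split; lra).
  assert (Hmv : m <= v) by (apply HA; intros z Hz; apply Hz).
  destruct (not_all_ex_not _ _ (Hns m ltac:(lra))) as [e He].
  apply imply_to_and in He. destruct He as [He Hflat]. apply Rnot_lt_le in Hflat.
  assert (Hleft : F (m - e) <= F u).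
  { destruct (Rle_dec (m - e) u); [apply cdf_mono; auto|].
    apply NNPP; intros Hgt.
    assert (m <= m - e); [|lra].
    apply HA. intros z Az. apply Rnot_lt_le; intros Hz.
    apply Hgt, Rle_trans with (F z); [apply cdf_mono; auto; lra|apply Az]. }
  destruct (Rle_dec v (m + e)) as [Hv|Hv].
  - apply Rle_trans with (F (m + e)); [apply cdf_mono; auto|lra].
  - assert (m + e <= m) by (apply HA; split; lra). lra.
Qed.

Lemma quant_bounded_of_supp_bounded F : is_cdf F -> supp_bounded F ->
  exists M, 0 < M /\ forall t, 0 < t < 1 -> - M <= quant F t <= M.
Proof.
  intros HF [M0 HM0]. set (M := Rabs M0 + 1).
  assert (Hout : forall z, M <= Rabs z -> ~ in_supp F z).
  { intros z Hz Hs. specialize (HM0 z Hs). pose proof (Rle_abs M0). unfold M in Hz. lra. }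
  assert (HM : 0 < M) by (unfold M; pose proof (Rabs_pos M0); lra).
  exists M. split; auto.
  intros t Ht. pose proof HF as (_ & _ & Hlo & Hhi). split.
  - destruct (Hlo t ltac:(lra)) as [y Hy].
    specialize (Hy (Rmin y (- M)) (Rmin_l _ _)). apply Rabs_def2 in Hy.
    apply quant_ge; auto.
    assert (F (- M) <= F (Rmin y (- M))); [|lra].
    apply cdf_flat_off_supp; auto; [apply Rmin_r|].
    intros z Hz. apply Hout. rewrite Rabs_left; lra.
  - destruct (Hhi (1 - t) ltac:(lra)) as [y Hy].
    specialize (Hy (Rmax y M) (Rmax_l _ _)). apply Rabs_def2 in Hy.
    assert (F (Rmax y M) <= F M).
    { apply cdf_flat_off_supp; auto; [apply Rmax_r|].
      intros z Hz. apply Hout. rewrite Rabs_right; lra. }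
    apply (quant_is_lub F HF t Ht). intros z Hz. apply Rnot_lt_le; intros HMz.
    assert (F M <= F z) by (apply cdf_mono; auto; lra). lra.
Qed.

Lemma quant_err_integral_le_range F n r M : is_cdf F -> 1 <= r -> (0 < n)%nat ->
  (forall t, 0 < t < 1 -> - M <= quant F t <= M) ->
  forall a b (pr : Riemann_integrable (quant_err F n r) a b), 0 < a -> a <= b -> b < 1 ->
  RiemannInt pr <= rpow (2 * M) r / INR n.
Proof.
  intros HF Hr Hn HM.
  assert (Hnr : 0 < INR n) by (apply lt_0_INR; auto).
  set (g := fun k => if Nat.eqb k 0 then - M else if Nat.eqb k n then M else quant F (INR k / INR n)).
  assert (Hg : forall i, (i < n)%nat -> forall u, INR i / INR n < u < INR (S i) / INR n ->
                 g i <= quant F u <= g (S i)).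
  { intros i Hi u Hu.
    pose proof (cell_bounds_01 n i ltac:(lia) Hn). pose proof (cell_bounds_01 n (S i) ltac:(lia) Hn).
    assert (0 < u < 1) by lra. unfold g. split.
    - destruct (Nat.eqb_spec i 0); [apply HM; auto|].
      destruct (Nat.eqb_spec i n); [lia|].
      apply quant_mono; auto; try lra.
      apply Rdiv_lt_0_compat; auto. apply lt_0_INR; lia.
    - destruct (Nat.eqb_spec (S i) 0); [lia|].
      destruct (Nat.eqb_spec (S i) n); [apply HM; auto|].
      apply quant_mono; auto; try lra.
      assert (INR (S i) < INR n) by (apply lt_INR; lia).
      apply Rmult_lt_reg_r with (INR n); auto. unfold Rdiv. rewrite Rmult_assoc, Rinv_l; lra. }
  intros a b pr Ha Hab Hb.
  replace (rpow (2 * M) r / INR n) with (rpow (g n - g O) r / INR n + psum (fun _ => 0) n).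
  2:{ rewrite psum_0. unfold g. rewrite Nat.eqb_refl. destruct (Nat.eqb_spec n 0); [lia|]. simpl.
      replace (M - - M) with (2 * M) by ring. ring. }
  apply (RiemannInt_cells_increments_le _ n r g); auto; [|intros; lra|].
  - intros i Hi. pose proof (Hg i Hi (cell_mid n i) (cell_mid_in_cell n i Hi)). lra.
  - intros i a' b' pr' Hi H1 H2 H3 _ _. rewrite Rplus_0_r.
    apply (quant_err_cell_le F HF n Hn r g i); auto; lra.
Qed.

Lemma Rpower_root_div_cancel c n r : 0 < c -> 0 < n -> 0 < r ->
  Rpower n (1 / r) * Rpower (Rpower c r / n) (1 / r) = c.
Proof.
  intros Hc Hn Hr. unfold Rpower.
  change (exp (r * ln c) / n) with (exp (r * ln c) * / n).
  rewrite ln_mult, ln_Rinv, ln_exp, <- exp_plus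
    by (try apply Rinv_0_lt_compat; auto; apply exp_pos).
  replace (1 / r * ln n + 1 / r * (r * ln c + - ln n)) with (ln c) by (field; lra).
  apply exp_ln; auto.
Qed.

Theorem dr_best_rate_of_bounded_supp F r : 1 <= r -> is_cdf F -> supp_bounded F ->
  exists M, forall n : nat, (1 <= n)%nat -> Rpower (INR n) (1 / r) * dr_best n r F <= M.
Proof.
  intros Hr HF Hsupp. destruct (quant_bounded_of_supp_bounded F HF Hsupp) as [M [HM HQ]].
  exists (2 * M). intros n Hn.
  assert (Hnr : 0 < INR n) by (apply lt_0_INR; lia).
  assert (HB : 0 < Rpower (2 * M) r / INR n) by (apply Rdiv_lt_0_compat; [apply Rpower_pos|auto]).
  destruct (dr_best_le F HF n ltac:(lia) r _ ltac:(lra) (Rlt_le _ _ HB)) as [_ Hd].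
  { rewrite <- (rpow_Rpower (2 * M)) by lra. apply quant_err_integral_le_range; auto; lia. }
  rewrite rpow_Rpower in Hd by auto.
  rewrite <- (Rpower_root_div_cancel (2 * M) (INR n) r) by lra.
  apply Rmult_le_compat_l; [left; apply Rpower_pos|auto].
Qed.

Lemma rpow_abs_diff_le_truncation x y L r s : 0 < L -> Rabs x <= L -> 0 <= r <= s ->
  rpow (Rabs (x - y)) r <= Rpower 2 r * (2 * Rpower L r + Rpower L (r - s) * rpow (Rabs y) s).
Proof.
  intros HL Hx Hrs.
  set (m := Rmax (Rabs x) (Rabs y)).
  assert (Hm0 : 0 <= m) by (apply Rle_trans with (Rabs x); [apply Rabs_pos|apply Rmax_l]).
  assert (Hxy : Rabs (x - y) <= 2 * m).
  { unfold Rminus. eapply Rle_trans; [apply Rabs_triang|]. rewrite Rabs_Ropp.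
    pose proof (Rmax_l (Rabs x) (Rabs y)) as Hmx. pose proof (Rmax_r (Rabs x) (Rabs y)) as Hmy.
    fold m in Hmx, Hmy. lra. }
  assert (Hmr : rpow m r <= rpow (Rabs x) r + rpow (Rabs y) r).
  { pose proof (rpow_nonneg (Rabs x) r). pose proof (rpow_nonneg (Rabs y) r).
    unfold m, Rmax. destruct (Rle_dec (Rabs x) (Rabs y)); lra. }
  assert (rpow (Rabs x) r <= Rpower L r)
    by (rewrite <- (rpow_Rpower L r) by lra; apply rpow_le_compat; [lra|split; [apply Rabs_pos|auto]]).
  pose proof (rpow_le_truncation (Rabs y) L r s (Rabs_pos _) HL Hrs).
  pose proof (Rpower_pos 2 r).
  eapply Rle_trans; [apply rpow_le_compat; [lra|split; [apply Rabs_pos|exact Hxy]]|].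
  rewrite rpow_mult_distr by lra. apply Rmult_le_compat_l; lra.
Qed.

Lemma RiemannInt_rpow_abs_diff_le f q x L r s a b (pr : Riemann_integrable f a b)
  (prq : Riemann_integrable (fun t => rpow (Rabs (q t)) s) a b) :
  0 < L -> Rabs x <= L -> 0 <= r <= s -> a <= b ->
  (forall t, a < t < b -> f t = rpow (Rabs (x - q t)) r) ->
  RiemannInt pr <= Rpower 2 r * (2 * Rpower L r * (b - a) + Rpower L (r - s) * RiemannInt prq).
Proof.
  intros HL Hx Hrs Hab Hf.
  set (K := Rpower 2 r * Rpower L (r - s)).
  assert (prh : Riemann_integrable (fun t => fct_cte (Rpower 2 r * (2 * Rpower L r)) t
                                             + K * rpow (Rabs (q t)) s) a b)
    by (apply RiemannInt_P10; [apply RiemannInt_P14|exact prq]).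
  eapply Rle_trans; [apply (RiemannInt_P19 pr prh Hab)|].
  - intros t Ht. rewrite Hf by auto. unfold fct_cte, K.
    pose proof (rpow_abs_diff_le_truncation x (q t) L r s HL Hx Hrs). lra.
  - rewrite (RiemannInt_P13 (RiemannInt_P14 a b _) prq prh), RiemannInt_P15.
    unfold K. right; ring.
Qed.

Section Levels.
Variable F : R -> R.
Hypothesis HF : is_cdf F.
Variables r s : R.
Hypothesis Hr : 1 <= r.
Hypothesis Hrs : r < s.
Variable n : nat.
Hypothesis Hn : (2 <= n)%nat.

Let Q := quant F.

Let Hnr : 0 < INR n.
Proof. apply lt_0_INR; lia. Qed.

Lemma inner_grid_01 j : (1 <= j <= n - 1)%nat -> 0 < INR j / INR n < 1.
Proof.
  intros Hj. assert (0 < INR j) by (apply lt_0_INR; lia).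
  assert (INR j < INR n) by (apply lt_INR; lia). split; [apply Rdiv_lt_0_compat; lra|].
  apply Rmult_lt_reg_r with (INR n); [lra|]. unfold Rdiv. rewrite Rmult_assoc, Rinv_l; lra.
Qed.

Lemma quant_err_cell_le_level L tau i a b (pr : Riemann_integrable (quant_err F n r) a b) :
  (i < n)%nat -> 0 < L -> Rabs (Q (cell_mid n i)) <= L ->
  INR i / INR n <= a -> a <= b -> b <= INR (S i) / INR n -> 0 < a -> b < 1 ->
  (forall prq : Riemann_integrable (fun t => rpow (Rabs (Q t)) s) a b, RiemannInt prq <= tau) ->
  RiemannInt pr <= Rpower 2 r * (2 * Rpower L r / INR n + Rpower L (r - s) * tau).
Proof.
  intros Hi HL Hc Ha Hab Hb Ha0 Hb1 Htail. pose proof Hnr.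
  assert (prq : Riemann_integrable (fun t => rpow (Rabs (Q t)) s) a b)
    by (apply rpow_abs_integrable; [apply quant_mono01| | | |]; auto; lra).
  eapply Rle_trans;
    [apply (RiemannInt_rpow_abs_diff_le _ Q (Q (cell_mid n i)) L r s a b pr prq); auto; try lra|].
  - intros t Ht. apply (quant_err_on_cell F HF n ltac:(lia)); [lia|lra].
  - assert (Hlen : b - a <= 1 / INR n).
    { rewrite S_INR in Hb. assert ((INR i + 1) / INR n = INR i / INR n + 1 / INR n) by (field; lra). lra. }
    pose proof (Htail prq). pose proof (Rpower_pos L r). pose proof (Rpower_pos L (r - s)).
    apply Rmult_le_compat_l; [left; apply Rpower_pos|].
    assert (2 * Rpower L r * (b - a) <= 2 * Rpower L r * (1 / INR n)) by (apply Rmult_le_compat_l; lra).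
    assert (Rpower L (r - s) * RiemannInt prq <= Rpower L (r - s) * tau) by (apply Rmult_le_compat_l; lra).
    replace (2 * Rpower L r / INR n) with (2 * Rpower L r * (1 / INR n)) by (field; lra). lra.
Qed.

Variables L tau : R.
Hypothesis HL : 0 < L.
Hypothesis Htau : 0 <= tau.
Hypothesis Hlevel : forall t, 1 / (2 * INR n) <= t <= 1 / INR n ->
  Rabs (Q t) <= L /\ Rabs (Q (1 - t)) <= L.
Hypothesis Htail_left : forall a b (prq : Riemann_integrable (fun t => rpow (Rabs (Q t)) s) a b),
  0 < a -> a <= b -> b <= 1 / INR n -> RiemannInt prq <= tau.
Hypothesis Htail_right : forall a b (prq : Riemann_integrable (fun t => rpow (Rabs (Q t)) s) a b),
  1 - 1 / INR n <= a -> a <= b -> b < 1 -> RiemannInt prq <= tau.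

Let Hlast : INR (n - 1) / INR n = 1 - 1 / INR n.
Proof. rewrite minus_INR by lia. simpl. field. apply Rgt_not_eq, Hnr. Qed.

(* The grid is clamped to [1/n, (n-1)/n], so the two end cells have zero increment. *)
Let g k := Q (INR (Nat.max 1 (Nat.min k (n - 1))) / INR n).
Let B0 := Rpower 2 r * (2 * Rpower L r / INR n + Rpower L (r - s) * tau).
Let E i := (if Nat.eqb i 0 then B0 else 0) + (if Nat.eqb i (n - 1) then B0 else 0).

Lemma end_cell_bound_nonneg : 0 <= B0.
Proof.
  pose proof Hnr. pose proof (Rpower_pos 2 r). pose proof (Rpower_pos L r).
  pose proof (Rpower_pos L (r - s)). unfold B0. apply Rmult_le_pos; [lra|].
  apply Rplus_le_le_0_compat; [apply Rdiv_nonneg; lra|]. apply Rmult_le_pos; lra.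
Qed.

Lemma clamped_grid_mono i : (i < n)%nat -> g i <= g (S i).
Proof.
  intros Hi. pose proof Hnr. unfold g. apply quant_mono; auto; try (apply inner_grid_01; lia).
  apply Rmult_le_compat_r; [left; apply Rinv_0_lt_compat; lra|apply le_INR; lia].
Qed.

Lemma clamped_grid_range : rpow (g n - g O) r <= Rpower 2 r * Rpower L r.
Proof.
  pose proof Hnr.
  assert (Hhalf : 1 / (2 * INR n) <= 1 / INR n)
    by (unfold Rdiv; apply Rmult_le_compat_l; [lra|apply Rinv_le_contravar; lra]).
  assert (H1n : 1 / INR n <= 1 - 1 / INR n).
  { assert (2 <= INR n) by (change 2 with (INR 2); apply le_INR; lia).
    apply Rmult_le_reg_r with (INR n); [lra|]. field_simplify; lra. }
  unfold g. replace (Nat.max 1 (Nat.min n (n - 1))) with (n - 1)%nat by lia.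
  replace (Nat.max 1 (Nat.min 0 (n - 1))) with 1%nat by lia.
  rewrite Hlast. change (INR 1) with 1.
  destruct (Hlevel (1 / INR n)) as [Hl Hr']; [lra|].
  apply Rabs_le_inv in Hl. apply Rabs_le_inv in Hr'.
  assert (0 < 1 / INR n) by (apply Rdiv_lt_0_compat; lra).
  assert (Q (1 / INR n) <= Q (1 - 1 / INR n)) by (apply quant_mono; auto; lra).
  rewrite Rpower_mult_distr, <- rpow_Rpower by lra.
  apply rpow_le_compat; lra.
Qed.

Lemma psum_end_cells : psum E n = 2 * B0.
Proof.
  unfold E. rewrite psum_plus, !psum_indicator.
  destruct (Nat.ltb_spec 0 n), (Nat.ltb_spec (n - 1) n); try lia. lra.
Qed.

Lemma clamped_cell_le i a b (pr : Riemann_integrable (quant_err F n r) a b) : (i < n)%nat ->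
  INR i / INR n <= a -> a <= b -> b <= INR (S i) / INR n -> 0 < a -> b < 1 ->
  RiemannInt pr <= rpow (g (S i) - g i) r / INR n + E i.
Proof.
  intros Hi Ha Hab Hb Ha0 Hb1. pose proof Hnr. pose proof end_cell_bound_nonneg.
  assert (Hinc : 0 <= rpow (g (S i) - g i) r / INR n) by (apply Rdiv_nonneg; [apply rpow_nonneg|lra]).
  assert (Hhalf : 1 / (2 * INR n) <= 1 / INR n)
    by (unfold Rdiv; apply Rmult_le_compat_l; [lra|apply Rinv_le_contravar; lra]).
  unfold E. destruct (Nat.eqb_spec i 0) as [->|Hi0].
  - assert (Hc : Rabs (Q (cell_mid n 0)) <= L).
    { replace (cell_mid n 0) with (1 / (2 * INR n)) by (unfold cell_mid; simpl; field; lra).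
      apply Hlevel; lra. }
    assert (Ht : forall prq : Riemann_integrable (fun t => rpow (Rabs (Q t)) s) a b,
               RiemannInt prq <= tau)
      by (intros prq; apply Htail_left; auto; change (INR 1) with 1 in Hb; lra).
    assert (RiemannInt pr <= B0)
      by exact (quant_err_cell_le_level L tau 0 a b pr ltac:(lia) HL Hc Ha Hab Hb Ha0 Hb1 Ht).
    destruct (Nat.eqb 0 (n - 1)); lra.
  - destruct (Nat.eqb_spec i (n - 1)) as [->|Hin].
    + assert (Hc : Rabs (Q (cell_mid n (n - 1))) <= L).
      { replace (cell_mid n (n - 1)) with (1 - 1 / (2 * INR n))
          by (unfold cell_mid; rewrite minus_INR by lia; simpl; field; lra).
        apply Hlevel; lra. }
      assert (Ht : forall prq : Riemann_integrable (fun t => rpow (Rabs (Q t)) s) a b,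
                 RiemannInt prq <= tau)
        by (intros prq; apply Htail_right; auto; lra).
      assert (RiemannInt pr <= B0)
        by exact (quant_err_cell_le_level L tau (n - 1) a b pr ltac:(lia) HL Hc Ha Hab Hb Ha0 Hb1 Ht).
      lra.
    + rewrite !Rplus_0_r. apply (quant_err_cell_le F HF n ltac:(lia) r g i); auto; try lra.
      intros u Hu. unfold g.
      replace (Nat.max 1 (Nat.min i (n - 1))) with i by lia.
      replace (Nat.max 1 (Nat.min (S i) (n - 1))) with (S i) by lia.
      pose proof (inner_grid_01 i ltac:(lia)). pose proof (inner_grid_01 (S i) ltac:(lia)).
      split; apply quant_mono; auto; lra.
Qed.

Lemma quant_err_integral_le_levels a b (pr : Riemann_integrable (quant_err F n r) a b) :
  0 < a -> a <= b -> b < 1 ->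
  RiemannInt pr <= Rpower 2 r * (5 * Rpower L r / INR n + 2 * Rpower L (r - s) * tau).
Proof.
  intros Ha Hab Hb. pose proof Hnr.
  eapply Rle_trans; [apply (RiemannInt_cells_increments_le _ n r g E); auto; try lia|].
  - apply clamped_grid_mono.
  - pose proof end_cell_bound_nonneg. intros i; unfold E; destruct (Nat.eqb i 0), (Nat.eqb i (n - 1)); lra.
  - intros i a' b' pr'. apply clamped_cell_le.
  - rewrite psum_end_cells. unfold B0.
    assert (rpow (g n - g O) r / INR n <= Rpower 2 r * Rpower L r / INR n)
      by (apply Rmult_le_compat_r; [left; apply Rinv_0_lt_compat|apply clamped_grid_range]; lra).
    assert (E5 : Rpower 2 r * (5 * Rpower L r / INR n + 2 * Rpower L (r - s) * tau)
      = Rpower 2 r * Rpower L r / INR n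
        + 2 * (Rpower 2 r * (2 * Rpower L r / INR n + Rpower L (r - s) * tau)))
      by (field; lra).
    lra.
Qed.

End Levels.

Lemma Rpower_level_pow eta N s : 0 < eta -> 0 < N -> 0 < s ->
  Rpower (eta * Rpower N (1 / s)) s = Rpower eta s * N.
Proof.
  intros He HN Hs. unfold Rpower. rewrite ln_mult, ln_exp by (auto; apply exp_pos).
  transitivity (exp (s * ln eta) * exp (ln N)); [rewrite <- exp_plus; f_equal; field; lra|].
  rewrite exp_ln; auto.
Qed.

Lemma Rpower_level_div eta N r s : 0 < eta -> 0 < N -> 0 < s ->
  Rpower (eta * Rpower N (1 / s)) r / N = Rpower eta r * Rpower N (r / s - 1).
Proof.
  intros He HN Hs. unfold Rpower. rewrite ln_mult, ln_exp by (auto; apply exp_pos).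
  rewrite <- (exp_ln N) at 2 by auto. unfold Rdiv at 1. rewrite <- exp_Ropp, <- !exp_plus.
  f_equal. field. lra.
Qed.

Lemma Rpower_level_tail eta N r s : 0 < eta -> 0 < N -> 0 < s ->
  Rpower (eta * Rpower N (1 / s)) (r - s) * Rpower eta s = Rpower eta r * Rpower N (r / s - 1).
Proof.
  intros He HN Hs. unfold Rpower. rewrite ln_mult, ln_exp by (auto; apply exp_pos).
  rewrite <- !exp_plus. f_equal. field. lra.
Qed.

Lemma Rpower_rate_cancel eta N r s : 0 < eta -> 0 < N -> 0 < r -> 0 < s ->
  Rpower N (1 / r - 1 / s) * Rpower (7 * Rpower 2 r * Rpower eta r * Rpower N (r / s - 1)) (1 / r)
  = Rpower 7 (1 / r) * (2 * eta).
Proof.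
  intros He HN Hr Hs. unfold Rpower.
  rewrite !ln_mult by (repeat apply Rmult_lt_0_compat; try lra; apply exp_pos).
  rewrite !ln_exp, <- !exp_plus.
  replace (2 * eta) with (exp (ln 2 + ln eta)) by (rewrite <- ln_mult, exp_ln; lra).
  rewrite <- exp_plus. f_equal. field. lra.
Qed.

Lemma abs_le_level_of_point A t eta N s : 0 < eta -> 0 < N -> 0 < s -> 1 / (2 * N) <= t ->
  t * rpow (Rabs A) s <= Rpower eta s / 2 -> Rabs A <= eta * Rpower N (1 / s).
Proof.
  intros He HN Hs Ht HA.
  assert (0 < 1 / (2 * N)) by (apply Rdiv_lt_0_compat; lra).
  assert (Ht0 : 0 < t) by lra.
  apply (rpow_le_inv _ _ s Hs (Rabs_pos _)); [apply Rmult_lt_0_compat; [lra|apply Rpower_pos]|].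
  rewrite Rpower_level_pow by auto.
  assert (Hinv : / t <= 2 * N).
  { replace (2 * N) with (/ (1 / (2 * N))) by (field; lra).
    apply Rinv_le_contravar; [apply Rdiv_lt_0_compat|]; lra. }
  pose proof (Rpower_pos eta s). pose proof (rpow_nonneg (Rabs A) s).
  apply Rle_trans with (Rpower eta s / 2 * / t).
  - apply Rmult_le_reg_l with t; auto.
    replace (t * (Rpower eta s / 2 * / t)) with (Rpower eta s / 2) by (field; lra). lra.
  - apply Rle_trans with (Rpower eta s / 2 * (2 * N)); [apply Rmult_le_compat_l; lra|right; field].
Qed.

Lemma quant_err_integral_le_rate F r s : 1 <= r -> r < s -> is_cdf F -> has_moment F s ->
  forall eta, 0 < eta -> exists N, forall n, (N <= n)%nat ->
  forall a b (pr : Riemann_integrable (quant_err F n r) a b), 0 < a -> a <= b -> b < 1 ->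
  RiemannInt pr <= 7 * Rpower 2 r * Rpower eta r * Rpower (INR n) (r / s - 1).
Proof.
  intros Hr Hrs HF Hmom eta Heta.
  assert (Hs : 0 < s) by lra. pose proof (quant_mono01 F HF) as HQ.
  set (e := Rpower eta s / 2). assert (He : 0 < e) by (unfold e; pose proof (Rpower_pos eta s); lra).
  destruct (moment_point_left _ s HQ Hs Hmom e He) as [d1 [Hd1 Hpt1]].
  destruct (moment_point_right _ s HQ Hs Hmom e He) as [d2 [Hd2 Hpt2]].
  destruct (moment_tail_left _ s HQ Hs Hmom (Rpower eta s) (Rpower_pos _ _)) as [d3 [Hd3 Htl]].
  destruct (moment_tail_right _ s HQ Hs Hmom (Rpower eta s) (Rpower_pos _ _)) as [d4 [Hd4 Htr]].
  set (d := Rmin (Rmin d1 d2) (Rmin d3 d4)).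
  assert (Hdd : d <= d1 /\ d <= d2 /\ d <= d3 /\ d <= d4).
  { unfold d. pose proof (Rmin_l (Rmin d1 d2) (Rmin d3 d4)). pose proof (Rmin_r (Rmin d1 d2) (Rmin d3 d4)).
    pose proof (Rmin_l d1 d2). pose proof (Rmin_r d1 d2).
    pose proof (Rmin_l d3 d4). pose proof (Rmin_r d3 d4).
    lra. }
  assert (Hd : 0 < d) by (unfold d; repeat apply Rmin_glb_lt; lra).
  destruct (archimed_cor1 d Hd) as [N0 [HN0 HN0pos]].
  exists (N0 + 2)%nat. intros n Hn a b pr Ha Hab Hb.
  assert (Hnr : 0 < INR n) by (apply lt_0_INR; lia).
  assert (Hinv : 1 / INR n < d).
  { apply Rle_lt_trans with (/ INR N0); auto. unfold Rdiv; rewrite Rmult_1_l.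
    apply Rinv_le_contravar; [apply lt_0_INR; auto|apply le_INR; lia]. }
  set (L := eta * Rpower (INR n) (1 / s)).
  assert (HL : 0 < L) by (apply Rmult_lt_0_compat; [lra|apply Rpower_pos]).
  eapply Rle_trans.
  - apply (quant_err_integral_le_levels F HF r s Hr Hrs n ltac:(lia) L (Rpower eta s)); auto.
    + left; apply Rpower_pos.
    + intros t Ht. assert (0 < 1 / (2 * INR n)) by (apply Rdiv_lt_0_compat; lra).
      split; apply (abs_le_level_of_point _ t); auto; try lra; [apply Hpt1|apply Hpt2]; lra.
    + intros a' b' prq Ha' Hab' Hb'. apply Htl; lra.
    + intros a' b' prq Ha' Hab' Hb'. apply Htr; lra.
  - assert (E1 : Rpower L r / INR n = Rpower eta r * Rpower (INR n) (r / s - 1))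
      by (apply Rpower_level_div; lra).
    assert (E2 : Rpower L (r - s) * Rpower eta s = Rpower eta r * Rpower (INR n) (r / s - 1))
      by (apply Rpower_level_tail; lra).
    replace (5 * Rpower L r / INR n) with (5 * (Rpower L r / INR n)) by (field; lra).
    replace (2 * Rpower L (r - s) * Rpower eta s) with (2 * (Rpower L (r - s) * Rpower eta s)) by ring.
    rewrite E1, E2. right; ring.
Qed.

Theorem dr_best_rate_of_moment F r s : 1 <= r -> r < s -> is_cdf F -> has_moment F s ->
  Un_cv (fun k => Rpower (INR (S k)) (1 / r - 1 / s) * dr_best (S k) r F) 0.
Proof.
  intros Hr Hrs HF Hmom eps Heps.
  set (eta := eps / 16). assert (Heta : 0 < eta) by (unfold eta; lra).
  destruct (quant_err_integral_le_rate F r s Hr Hrs HF Hmom eta Heta) as [N HN].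
  exists N. intros k Hk. set (n := S k).
  assert (Hnr : 0 < INR n) by (apply lt_0_INR; lia).
  set (C := 7 * Rpower 2 r * Rpower eta r * Rpower (INR n) (r / s - 1)).
  assert (HC : 0 < C).
  { unfold C. pose proof (Rpower_pos 2 r). pose proof (Rpower_pos eta r).
    pose proof (Rpower_pos (INR n) (r / s - 1)). repeat apply Rmult_lt_0_compat; lra. }
  destruct (dr_best_le F HF n ltac:(lia) r C ltac:(lra) (Rlt_le _ _ HC) (HN n ltac:(lia)))
    as [Hd0 Hd1].
  rewrite rpow_Rpower in Hd1 by auto.
  assert (Hrate : Rpower (INR n) (1 / r - 1 / s) * dr_best n r F <= Rpower 7 (1 / r) * (2 * eta)).
  { rewrite <- (Rpower_rate_cancel eta (INR n) r s) by lra.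
    apply Rmult_le_compat_l; [left; apply Rpower_pos|auto]. }
  assert (H7 : Rpower 7 (1 / r) <= 7).
  { rewrite <- (Rpower_1 7) at 2 by lra. apply Rle_Rpower; [lra|].
    apply Rmult_le_reg_r with r; [lra|]. field_simplify; lra. }
  pose proof (Rpower_pos (INR n) (1 / r - 1 / s)).
  assert (0 <= Rpower (INR n) (1 / r - 1 / s) * dr_best n r F) by (apply Rmult_le_pos; lra).
  unfold R_dist. rewrite Rminus_0_r, Rabs_right by lra.
  assert (Rpower 7 (1 / r) * (2 * eta) <= 7 * (2 * eta)) by (apply Rmult_le_compat_r; lra).
  unfold eta in *. lra.
Qed.

Theorem theorem5p8 (r : R) (F : R -> R) :
  1 <= r -> is_cdf F -> has_moment F r ->
  (forall s : R, r < s -> has_moment F s ->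
     Un_cv (fun k => Rpower (INR (S k)) (1 / r - 1 / s) * dr_best (S k) r F) 0) /\
  (supp_bounded F ->
     exists M N, forall n : nat, (N <= n)%nat -> (1 <= n)%nat ->
       Rpower (INR n) (1 / r) * dr_best n r F <= M).
Proof.
  intros Hr HF _. split.
  - intros s Hrs Hmom. apply dr_best_rate_of_moment; auto.
  - intros Hsupp. destruct (dr_best_rate_of_bounded_supp F r Hr HF Hsupp) as [M HM].
    exists M, 0%nat. intros n _ Hn. auto.
Qed.
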